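(* Let $M$ be a $4$-dimensional manifold with local coordinates $(x^1,x^2,x^3,x^4)$ and coordinate frame $e_i=\partial/\partial x^i$. Let $g$ be a Riemannian metric whose components $g_{ij}=g(e_i,e_j)$ are \[(g_{ij})=\begin{pmatrix} A&B&C&B\\ B&A&B&C\\ C&B&A&B\\ B&C&B&A\end{pmatrix},\] where $A,B,C$ are smooth functions with $A>C>B>0$. Let $Q$ be the $(1,1)$-tensor with components $Q_j^k$ given by the matrix with rows $(0,1,0,0),(0,0,1,0),(0,0,0,1),(1,0,0,0)$, and let $P=Q^2$, whose component matrix $(P_j^k)$ has rows $(0,0,1,0),(0,0,0,1),(1,0,0,0),(0,1,0,0)$. Then $(M,g,P)$ is a Riemannian almost product manifold belonging to the class $\mathcal{W}_1\oplus\mathcal{W}_2$, i.e. the tensor $F(x,y,z)=g((\nabla_xP)y,z)$ satisfies \[F(x,y,Pz)+F(y,z,Px)+F(z,x,Py)=0\] for all vector fields $x,y,z$ (equivalently, the Nijenhuis tensor of $P$ vanishes).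
   Context: $\nabla$ denotes the Levi-Civita connection of $g$. One has $Q^4=\mathrm{id}$, $Q^2\neq\pm\mathrm{id}$, $g(Qx,Qy)=g(x,y)$, hence $P^2=\mathrm{id}$, $P\neq\pm\mathrm{id}$, $g(Px,Py)=g(x,y)$, $\mathrm{tr}P=0$. In the Staikova–Gribachev classification of such manifolds, the class $\mathcal{W}_1\oplus\mathcal{W}_2$ (Riemannian product manifolds) is characterized by $F(x,y,Pz)+F(y,z,Px)+F(z,x,Py)=0$. *)

From HB Require Import structures.
From mathcomp Require Import all_boot all_order all_algebra.
From mathcomp Require Import all_classical all_reals topology normedtype derive.
Set Implicit Arguments. Unset Strict Implicit. Unset Printing Implicit Defensive.
Import Order.TTheory GRing.Theory Num.Theory.
Import numFieldNormedType.Exports.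
Local Open Scope ring_scope.
Local Open Scope classical_set_scope.

Definition pt (R : realType) := 'rV[R]_4.

Definition ecoord (R : realType) (i : 'I_4) : 'rV[R]_4 := delta_mx 0 i.

Definition pd (R : realType) (f : 'rV[R]_4 -> R) (i : 'I_4) (p : 'rV[R]_4) : R :=
  derive f p (ecoord R i).

Definition iterD (R : realType) (vs : seq 'rV[R]_4) (f : 'rV[R]_4 -> R)
  : 'rV[R]_4 -> R :=
  foldr (fun v g => fun q => derive g q v) f vs.

Definition smooth_on (R : realType) (U : set 'rV[R]_4) (f : 'rV[R]_4 -> R) :=
  forall (vs : seq 'rV[R]_4) (v : 'rV[R]_4) (p : 'rV[R]_4),
    U p -> derivable (iterD vs f) p v.

(* metric components g_ij = g(e_i,e_j): circulant matrix with rows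
   (A B C B), (B A B C), (C B A B), (B C B A) *)
Definition gmat (R : realType) (A B C : 'rV[R]_4 -> R) (p : 'rV[R]_4)
  : 'M[R]_4 :=
  \matrix_(i < 4, j < 4)
    match ((i + 4 - j) %% 4)%N with
    | 0%N => A p
    | 2%N => C p
    | _ => B p
    end.

(* Q_j^k (row j, column k): rows (0,1,0,0),(0,0,1,0),(0,0,0,1),(1,0,0,0) *)
Definition Qmat (R : realType) : 'M[R]_4 :=
  \matrix_(j < 4, k < 4) (((k : nat) == ((j + 1) %% 4)%N) : nat)%:R.

Definition Pmat (R : realType) : 'M[R]_4 := Qmat R *m Qmat R.

Definition Gamma (R : realType) (A B C : 'rV[R]_4 -> R) (p : 'rV[R]_4)
  (l i m : 'I_4) : R :=
  2^-1 * \sum_(s < 4) invmx (gmat A B C p) l s *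
    (pd (fun q => gmat A B C q m s) i p + pd (fun q => gmat A B C q i s) m p
     - pd (fun q => gmat A B C q i m) s p).

Definition nablaP (R : realType) (A B C : 'rV[R]_4 -> R) (p : 'rV[R]_4)
  (i j l : 'I_4) : R :=
  pd (fun _ => Pmat R j l) i p
  + \sum_(m < 4) Gamma A B C p l i m * Pmat R j m
  - \sum_(m < 4) Gamma A B C p m i j * Pmat R m l.

(* F_{ijk} = F(e_i,e_j,e_k) = g((nabla_{e_i} P) e_j, e_k) *)
Definition Fcomp (R : realType) (A B C : 'rV[R]_4 -> R) (p : 'rV[R]_4)
  (i j k : 'I_4) : R :=
  \sum_(l < 4) nablaP A B C p i j l * gmat A B C p l k.

(* F_p(x,y,z) for tangent vectors x,y,z at p (components in the frame e_i) *)
Definition Ften (R : realType) (A B C : 'rV[R]_4 -> R) (p : 'rV[R]_4)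
  (x y z : 'rV[R]_4) : R :=
  \sum_(i < 4) \sum_(j < 4) \sum_(k < 4) x 0 i * y 0 j * z 0 k * Fcomp A B C p i j k.

Definition Pvec (R : realType) (z : 'rV[R]_4) : 'rV[R]_4 := z *m Pmat R.

From HB Require Import structures.
From mathcomp Require Import all_boot all_order all_algebra all_fingroup.
From mathcomp Require Import all_classical all_reals topology normedtype derive.
From mathcomp Require Import ring lra.
Import Order.TTheory GRing.Theory Num.Theory.
Import numFieldNormedType.Exports.
Local Open Scope ring_scope.
Set Implicit Arguments. Unset Strict Implicit.

(* P is the permutation matrix of the half-turn s : i |-> i + 2 of the
   coordinates, a fixed-point-free involution, and g_{s i, s j} = g_{i j} at
   every point, hence also for every derivative of g.  As P has constant
   components,
     F(e_i, e_j, e_k) = Gamma_{i, s j, k} - Gamma_{i, j, s k}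
   with Gamma the Christoffel symbols of the first kind, and in the cyclic sum
   of F(x, y, P z) the derivatives of g cancel in pairs by the symmetry and
   s-invariance of g.  Positive definiteness comes from the decomposition
     v g v^T = (A - C) |v|^2 + (B + C)/2 (v1 + v2 + v3 + v4)^2
                             + (C - B)/2 (v1 - v2 + v3 - v4)^2. *)

Lemma sum_ord4 (V : nmodType) (F : 'I_4 -> V) :
  \sum_(i < 4) F i = F 0 + F 1 + F 2 + F 3.
Proof.
rewrite !big_ord_recl big_ord0 addr0 !addrA.
by congr (F _ + F _ + F _ + F _); apply: val_inj.
Qed.

Lemma sumr_delta (R : pzSemiRingType) n (F : 'I_n -> R) (a : 'I_n) :
  \sum_(m < n) F m * (m == a)%:R = F a.
Proof.
rewrite (bigD1 a) //= eqxx mulr1 big1 ?addr0 // => m /negbTE ->.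
by rewrite mulr0.
Qed.

Lemma sumr_sqr_gt0 (R : realDomainType) n (v : 'rV[R]_n) :
  v != 0 -> 0 < \sum_(i < n) v 0 i ^+ 2.
Proof.
move=> v_neq0; rewrite lt_def sumr_ge0 ?andbT => [|i _]; last exact: sqr_ge0.
apply: contra v_neq0 => /eqP /psumr_eq0P v0; apply/eqP/rowP => i.
by apply/eqP; rewrite mxE -sqrf_eq0 v0 // => k _; exact: sqr_ge0.
Qed.

Lemma posdef_unitmx (R : realFieldType) n (M : 'M[R]_n) :
  (forall v : 'rV[R]_n, v != 0 -> 0 < (v *m M *m v^T) 0 0) -> M \in unitmx.
Proof.
move=> M_pos; rewrite unitmxE unitfE; apply/negP => /det0P [v v_neq0 vM0].
by have := M_pos v v_neq0; rewrite vM0 mul0mx mxE ltxx.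
Qed.

Lemma invmx_sym_contractK (R : fieldType) n (G : 'M[R]_n) (e : 'I_n -> R) k :
  G \in unitmx -> G^T = G ->
  \sum_(l < n) (\sum_(s < n) invmx G l s * e s) * G l k = e k.
Proof.
move=> G_unit G_sym; under eq_bigr do rewrite mulr_suml.
rewrite exchange_big /= -sumr_delta; apply: eq_bigr => s _.
have -> : (s == k)%:R = (invmx G *m G) s k by rewrite mulVmx // mxE.
rewrite mxE mulr_sumr.
by apply: eq_bigr => l _; rewrite -{1}G_sym -trmx_inv !mxE mulrAC mulrC.
Qed.

Section PermMatrix.
Variables (R : pzRingType) (n : nat).
Implicit Types (s : 'S_n) (M : 'M[R]_n).

Lemma perm_mxE s i j : perm_mx s i j = (s i == j)%:R :> R.
Proof. by rewrite !mxE. Qed.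

Lemma mulmx_perm_mxE m (v : 'M[R]_(m, n)) s i k :
  (v *m perm_mx s) i k = v i ((s^-1)%g k).
Proof. by rewrite -{1}[s]invgK -col_permE mxE. Qed.

Lemma perm_mx_conj s M :
  perm_mx s *m M *m (perm_mx s)^T = \matrix_(i, j) M (s i) (s j).
Proof.
by apply/matrixP => i j; rewrite tr_perm_mx -col_permE -row_permE !mxE.
Qed.

Lemma mxtrace_perm_mx s : (forall i, s i != i) -> \tr (perm_mx s : 'M[R]_n) = 0.
Proof.
move=> s_fpf; rewrite /mxtrace big1 // => i _.
by rewrite perm_mxE (negbTE (s_fpf i)).
Qed.

End PermMatrix.

Definition shift n (a : 'I_n.+1) : 'S_n.+1 := perm (addrI a).

Lemma shiftE n (a j : 'I_n.+1) : shift a j = a + j.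
Proof. by rewrite permE. Qed.

Lemma shiftM n (a b : 'I_n.+1) : (shift a * shift b)%g = shift (b + a).
Proof. by apply/permP => j; rewrite permM !shiftE addrA. Qed.

Definition half_turn : 'S_4 := shift 2.

Lemma half_turnV : (half_turn^-1)%g = half_turn.
Proof.
apply/permP => j; apply: (@perm_inj _ half_turn).
rewrite permKV !shiftE addrA.
have -> : 2 + 2 = 0 :> 'I_4 by apply: val_inj.
by rewrite add0r.
Qed.

Lemma half_turnK : involutive half_turn.
Proof. by move=> j; rewrite -{1}half_turnV permK. Qed.

Lemma half_turn_neq j : half_turn j != j.
Proof. by rewrite shiftE -{2}[j]add0r (inj_eq (addIr j)). Qed.

Section AlmostProductStructure.
Variable R : realType.

Lemma Qmat_perm : Qmat R = perm_mx (shift 1).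
Proof. by apply/matrixP => j k; rewrite perm_mxE mxE shiftE eq_sym addrC. Qed.

Lemma Pmat_perm : Pmat R = perm_mx half_turn.
Proof. by rewrite /Pmat Qmat_perm -perm_mxM shiftM. Qed.

Lemma Pmat_involutive : Pmat R *m Pmat R = 1%:M.
Proof. by rewrite Pmat_perm -perm_mxM -{1}half_turnV mulVg perm_mx1. Qed.

Lemma Pmat00 : Pmat R 0 0 = 0.
Proof. by rewrite Pmat_perm perm_mxE (negbTE (half_turn_neq 0)). Qed.

Lemma Pmat_neq1 : Pmat R != 1%:M.
Proof.
apply/eqP => /(congr1 (fun M : 'M_4 => M 0 0)); rewrite Pmat00 mxE => /eqP.
by rewrite eq_sym oner_eq0.
Qed.

Lemma Pmat_neqN1 : Pmat R != - 1%:M.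
Proof.
apply/eqP => /(congr1 (fun M : 'M_4 => M 0 0)); rewrite Pmat00 !mxE /= => /eqP.
by rewrite eq_sym oppr_eq0 oner_eq0.
Qed.

Lemma mxtrace_Pmat : \tr (Pmat R) = 0.
Proof. by rewrite Pmat_perm mxtrace_perm_mx // => j; exact: half_turn_neq. Qed.

End AlmostProductStructure.

Section Metric.
Variables (R : realType) (A B C : 'rV[R]_4 -> R).
Local Notation g := (gmat A B C).

Lemma gmat_sym q i j : g q i j = g q j i.
Proof. by rewrite !mxE; case: i j => [[|[|[|[|?]]]] ?] [[|[|[|[|?]]]] ?]. Qed.

Lemma gmatT q : (g q)^T = g q.
Proof. by apply/matrixP => i j; rewrite mxE gmat_sym. Qed.

Lemma gmat_half_turn q i j : g q (half_turn i) (half_turn j) = g q i j.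
Proof. by rewrite !mxE !shiftE; case: i j => [[|[|[|[|?]]]] ?] [[|[|[|[|?]]]] ?]. Qed.

Lemma gmat_half_turnl q i j : g q (half_turn i) j = g q i (half_turn j).
Proof. by rewrite -{1}(half_turnK j) gmat_half_turn. Qed.

Lemma Pmat_gmat q : Pmat R *m g q *m (Pmat R)^T = g q.
Proof.
by rewrite Pmat_perm perm_mx_conj; apply/matrixP => i j; rewrite mxE gmat_half_turn.
Qed.

Lemma gmat_quadE p (v : 'rV[R]_4) :
  (v *m g p *m v^T) 0 0 = (A p - C p) * \sum_(i < 4) v 0 i ^+ 2
    + (B p + C p) / 2 * (v 0 0 + v 0 1 + v 0 2 + v 0 3) ^+ 2
    + (C p - B p) / 2 * (v 0 0 - v 0 1 + v 0 2 - v 0 3) ^+ 2.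
Proof. by rewrite !(mxE, sum_ord4) /=; field. Qed.

Lemma gmat_posdef p : 0 < B p -> B p < C p -> C p < A p ->
  forall v : 'rV[R]_4, v != 0 -> 0 < (v *m g p *m v^T) 0 0.
Proof.
move=> B_gt0 BC CA v /sumr_sqr_gt0 v2_gt0; rewrite gmat_quadE.
have := sqr_ge0 (v 0 0 + v 0 1 + v 0 2 + v 0 3).
have := sqr_ge0 (v 0 0 - v 0 1 + v 0 2 - v 0 3).
nra.
Qed.

End Metric.

Definition christoffel1 (R : realType) (G : 'rV[R]_4 -> 'M[R]_4) (p : 'rV[R]_4)
    (i m s : 'I_4) : R :=
  2^-1 * (pd (fun q => G q m s) i p + pd (fun q => G q i s) m p
          - pd (fun q => G q i m) s p).

Section ChristoffelCyclic.
Variables (R : realType) (G : 'rV[R]_4 -> 'M[R]_4) (s : 'S_4) (p : 'rV[R]_4).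
Hypothesis G_sym : forall q i j, G q i j = G q j i.
Hypothesis G_perm : forall q i j, G q (s i) (s j) = G q i j.
Hypothesis sK : involutive s.

Lemma christoffel1_cyclic i j k :
  christoffel1 G p i (s j) (s k) - christoffel1 G p i j k
  + (christoffel1 G p j (s k) (s i) - christoffel1 G p j k i)
  + (christoffel1 G p k (s i) (s j) - christoffel1 G p k i j) = 0.
Proof.
have d_sym x m l : pd (fun q => G q m l) x p = pd (fun q => G q l m) x p.
  by congr (pd _ x p); apply: funext => q; exact: G_sym.
have d_perm x m l : pd (fun q => G q (s m) (s l)) x p = pd (fun q => G q m l) x p.
  by congr (pd _ x p); apply: funext => q; exact: G_perm.
have d_swap x m l : pd (fun q => G q m (s l)) x p = pd (fun q => G q l (s m)) x p.
  by rewrite -{1}(sK m) d_perm d_sym.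
rewrite /christoffel1 !d_perm (d_sym i k j) (d_sym j i k) (d_sym k j i).
rewrite (d_swap (s j) i k) (d_swap (s k) j i) (d_swap (s i) k j).
ring.
Qed.

End ChristoffelCyclic.

Section LeviCivita.
Variables (R : realType) (A B C : 'rV[R]_4 -> R) (p : 'rV[R]_4).
Local Notation g := (gmat A B C).
Local Notation h := half_turn.

Lemma GammaE l i m :
  Gamma A B C p l i m = \sum_(s < 4) invmx (g p) l s * christoffel1 g p i m s.
Proof. by rewrite /Gamma mulr_sumr; apply: eq_bigr => s _; rewrite mulrCA. Qed.

Lemma nablaP_E i j l :
  nablaP A B C p i j l = Gamma A B C p l i (h j) - Gamma A B C p (h l) i j.
Proof.
rewrite /nablaP /pd derive_cst add0r Pmat_perm; congr (_ - _).
  by under eq_bigr do rewrite perm_mxE eq_sym; rewrite sumr_delta.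
under eq_bigr do rewrite perm_mxE (canF_eq (permK h)) half_turnV.
by rewrite sumr_delta.
Qed.

Hypothesis g_unit : g p \in unitmx.

Lemma Fcomp_E i j k :
  Fcomp A B C p i j k = christoffel1 g p i (h j) k - christoffel1 g p i j (h k).
Proof.
rewrite /Fcomp; under eq_bigr do rewrite nablaP_E mulrBl !GammaE.
rewrite sumrB invmx_sym_contractK ?gmatT //; congr (_ - _).
rewrite (reindex_inj (@perm_inj _ h)) /=.
under eq_bigr do rewrite half_turnK gmat_half_turnl.
by rewrite invmx_sym_contractK ?gmatT.
Qed.

Lemma Fcomp_cyclic i j k :
  Fcomp A B C p i j (h k) + Fcomp A B C p j k (h i) + Fcomp A B C p k i (h j) = 0.
Proof.
rewrite !Fcomp_E !half_turnK.
apply: christoffel1_cyclic;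
  [exact: gmat_sym | exact: gmat_half_turn | exact: half_turnK].
Qed.

End LeviCivita.

Definition trilinear (R : pzRingType) n (T : 'I_n -> 'I_n -> 'I_n -> R)
    (x y z : 'rV[R]_n) : R :=
  \sum_(i < n) \sum_(j < n) \sum_(k < n) x 0 i * y 0 j * z 0 k * T i j k.

Lemma trilinear_cyclic (R : comPzRingType) n (T : 'I_n -> 'I_n -> 'I_n -> R)
    (x y z : 'rV[R]_n) :
  (forall i j k, T i j k + T j k i + T k i j = 0) ->
  trilinear T x y z + trilinear T y z x + trilinear T z x y = 0.
Proof.
move=> T_cyc.
have rotate (F : 'I_n -> 'I_n -> 'I_n -> R) :
    \sum_(a < n) \sum_(b < n) \sum_(c < n) F a b c
    = \sum_(c < n) \sum_(a < n) \sum_(b < n) F a b c.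
  by under eq_bigr do rewrite exchange_big; rewrite exchange_big.
rewrite /trilinear [X in _ + X + _]rotate [X in _ + _ + X]rotate [X in _ + _ + X]rotate.
rewrite -!big_split /=; apply: big1 => i _.
rewrite -!big_split /=; apply: big1 => j _.
rewrite -!big_split /=; apply: big1 => k _.
transitivity (x 0 i * y 0 j * z 0 k * (T i j k + T j k i + T k i j)); first ring.
by rewrite T_cyc mulr0.
Qed.

Lemma Ften_Pvec (R : realType) (A B C : 'rV[R]_4 -> R) p x y z :
  Ften A B C p x y (Pvec z)
  = trilinear (fun i j k => Fcomp A B C p i j (half_turn k)) x y z.
Proof.
apply: eq_bigr => i _; apply: eq_bigr => j _.
rewrite (reindex_inj (@perm_inj _ half_turn)) /=; apply: eq_bigr => k _.
by rewrite /Pvec Pmat_perm mulmx_perm_mxE permK.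
Qed.

Theorem lemma3p1 (R : realType) (U : set 'rV[R]_4) (A B C : 'rV[R]_4 -> R) :
  open U ->
  smooth_on U A -> smooth_on U B -> smooth_on U C ->
  (forall p, U p -> 0 < B p /\ B p < C p /\ C p < A p) ->
  (* g is a Riemannian metric on U *)
  (forall p, U p -> (gmat A B C p)^T = gmat A B C p /\
     forall v : 'rV[R]_4, v != 0 -> 0 < (v *m gmat A B C p *m v^T) 0 0) /\
  (* P is an almost product structure compatible with g, tr P = 0 *)
  Pmat R *m Pmat R = 1%:M /\ Pmat R != 1%:M /\ Pmat R != - 1%:M /\
  \tr (Pmat R) = 0 /\
  (forall p, U p -> Pmat R *m gmat A B C p *m (Pmat R)^T = gmat A B C p) /\
  (* class W1 (+) W2 *)
  (forall p, U p -> forall x y z : 'rV[R]_4,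
     Ften A B C p x y (Pvec z) + Ften A B C p y z (Pvec x)
     + Ften A B C p z x (Pvec y) = 0).
Proof.
(* Derivatives enter only through the total [pd]; the cancellation holds between
   their values, so openness and smoothness are not needed. *)
move=> _ _ _ _ ABC_pos.
have g_posdef p : U p ->
    forall v : 'rV[R]_4, v != 0 -> 0 < (v *m gmat A B C p *m v^T) 0 0.
  by move=> /ABC_pos [B_gt0 [BC CA]]; exact: gmat_posdef.
split; first by move=> p Up; split; [exact: gmatT | exact: g_posdef].
split; first exact: Pmat_involutive.
split; first exact: Pmat_neq1.
split; first exact: Pmat_neqN1.
split; first exact: mxtrace_Pmat.
split; first by move=> p _; exact: Pmat_gmat.
move=> p Up x y z; rewrite !Ften_Pvec; apply: trilinear_cyclic.
exact/Fcomp_cyclic/posdef_unitmx/g_posdef.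
Qed.
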